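(* Let $\mathcal{A}\in\hat{\mathcal{T}}_7$ with $c_{15}^7=c_{25}^7=0$. Then $\mathcal{A}$ is isomorphic to a unique algebra structure $\mathcal{A}'\in\hat{\mathcal{T}}_7$ whose structure constants $d_{ij}^k$ satisfy $d_{15}^7=d_{25}^7=0$ and $d_{46}^7=1$.
   Context: Over $\mathbb{C}$, basis $e_1,\dots,e_7$, $e_ie_j=\sum_kc_{ij}^ke_k$. $\hat{\mathcal{T}}_7$ is the family of anticommutative algebra structures with $c_{ij}^k=0$ whenever $k\le\max\{i,j\}$, $e_ie_{i+1}=e_{i+2}$ for $1\le i\le5$, $c_{13}^4=c_{14}^5=c_{15}^6=c_{24}^5=c_{25}^6=c_{14}^6=c_{24}^6=c_{13}^6=0$, $c_{35}^6=1$ and $c_{13}^5c_{46}^7\ne0$, other constants arbitrary subject to anticommutativity. *)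

From mathcomp Require Import all_boot all_algebra.
From mathcomp Require Import reals Rstruct complex.
Import GRing.Theory Num.Theory.
Local Open Scope ring_scope.

Notation Cplx := (Rdefinitions.R)[i].

(* Structure constants of a 7-dimensional algebra on the basis e_1..e_7.
   Indices are ordinals 'I_7, where ordinal m stands for basis vector e_(m+1):
   e_i e_j = \sum_k c_ij^k e_k. *)
Definition sconst := 'I_7 -> 'I_7 -> 'I_7 -> Cplx.

Definition cf (c : sconst) (i j k : nat) : Cplx :=
  c (inord i.-1) (inord j.-1) (inord k.-1).

Definition amul (c : sconst) (x y : 'rV[Cplx]_7) : 'rV[Cplx]_7 :=
  \row_k \sum_(i < 7) \sum_(j < 7) x 0 i * y 0 j * c i j k.

Definition alg_iso (c d : sconst) : Prop :=
  exists P : 'M[Cplx]_7, P \in unitmx /\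
    forall x y : 'rV[Cplx]_7, amul c x y *m P = amul d (x *m P) (y *m P).

Definition in_T7hat (c : sconst) : Prop :=
  (forall i k : 'I_7, c i i k = 0) /\
  (forall i j k : 'I_7, c i j k = - c j i k) /\
  (forall i j k : 'I_7, (k <= maxn i j)%N -> c i j k = 0) /\
  (forall i k : nat, (1 <= i <= 5)%N -> (1 <= k <= 7)%N ->
     cf c i i.+1 k = (k == i.+2)%:R) /\
  cf c 1 3 4 = 0 /\ cf c 1 4 5 = 0 /\ cf c 1 5 6 = 0 /\ cf c 2 4 5 = 0 /\
  cf c 2 5 6 = 0 /\ cf c 1 4 6 = 0 /\ cf c 2 4 6 = 0 /\ cf c 1 3 6 = 0 /\
  cf c 3 5 6 = 1 /\
  cf c 1 3 5 * cf c 4 6 7 != 0.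

(* Existence: the diagonal change of basis
   e_i |-> w_i e_i with weights (a, 1, a, a, a^2, a^3, a^5) preserves all the
   fixed products of \hat T_7 and multiplies c_467 by a, so a = 1/c_467
   yields an isomorphic member with c_467 = 1 (rescale_iso, rescale_T7hat,
   rescale_normalized).  Uniqueness (normalized_iso_eq): if P is an
   isomorphism between two normalized members, comparing coordinates in
   (e_i e_j) P = (e_i P)(e_j P) along the chain e_i e_(i+1) = e_(i+2) shows
   successively that P is block upper triangular (lower_zero), that its
   diagonal obeys P_(i+2)(i+2) = P_ii P_(i+1)(i+1) and is nonzero
   (diag_recurrence, diag_neq0), that its upper left 5x5 block is diagonal
   (upper_block_zero), that its diagonal is 1 (diag_one), and finally that it
   agrees with the identity except for the harmless entries e_1, e_2 -> e_7
   (near_identity); the remaining coordinate equations then force equal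
   constants (params_eq). *)

From mathcomp Require Import all_boot all_algebra.
From mathcomp Require Import reals Rstruct complex.
From mathcomp Require Import ring zify.
Import GRing.Theory Num.Theory.
Local Open Scope ring_scope.

(* Concrete basis indices: 'E n is the ordinal n < 7, i.e. the vector e_(n+1). *)
Notation "''E' n" := (@Ordinal 7 n isT) (at level 0, n at level 0, format "''E' n").

Lemma ord7_cases (Q : 'I_7 -> Prop) :
  Q 'E0 -> Q 'E1 -> Q 'E2 -> Q 'E3 -> Q 'E4 -> Q 'E5 -> Q 'E6 -> forall i, Q i.
Proof.
move=> Q0 Q1 Q2 Q3 Q4 Q5 Q6 [i Hi].
by do 7?[case: i Hi => [|i] Hi; first by rewrite (bool_irrelevance Hi isT)].
Qed.

Lemma sum_ord7 (F : 'I_7 -> Cplx) : \sum_(i < 7) F i =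
  F 'E0 + F 'E1 + F 'E2 + F 'E3 + F 'E4 + F 'E5 + F 'E6.
Proof.
rewrite !big_ord_recl big_ord0 addr0 !addrA.
by do !congr (_ + _); congr F; apply: val_inj.
Qed.

Lemma amul_delta (c : sconst) (i j : 'I_7) :
  amul c (delta_mx 0 i) (delta_mx 0 j) = \row_k c i j k.
Proof.
apply/rowP => k; rewrite !mxE (bigD1 i) //= [X in _ + X = _]big1 ?addr0; last first.
  by move=> a ai; rewrite big1 // => b _; rewrite mxE (negbTE ai) andbF !mul0r.
rewrite (bigD1 j) //= [X in _ + X = _]big1 ?addr0; last first.
  by move=> b bj; rewrite !mxE (negbTE bj) andbF mulr0 mul0r.
by rewrite !mxE !eqxx !mul1r.
Qed.

Lemma alg_iso_coord (c d : sconst) (P : 'M[Cplx]_7) :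
  (forall x y : 'rV[Cplx]_7, amul c x y *m P = amul d (x *m P) (y *m P)) ->
  forall i j k : 'I_7, \sum_(l < 7) c i j l * P l k =
     \sum_(a < 7) \sum_(b < 7) P i a * P j b * d a b k.
Proof.
move=> HP i j k.
have := congr1 (fun M : 'rV_7 => M 0 k) (HP (delta_mx 0 i) (delta_mx 0 j)).
rewrite amul_delta -!rowE !mxE.
under eq_bigr do rewrite mxE.
under [in RHS]eq_bigr do under eq_bigr do rewrite !mxE.
by [].
Qed.

Lemma amul_ext {c c' : sconst} :
  (forall i j k, c i j k = c' i j k) -> forall x y, amul c x y = amul c' x y.
Proof.
move=> H x y; apply/rowP => k; rewrite !mxE.
by apply: eq_bigr => i _; apply: eq_bigr => j _; rewrite H.
Qed.

Lemma alg_iso_ext {c c' d d' : sconst} :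
  (forall i j k, c i j k = c' i j k) -> (forall i j k, d i j k = d' i j k) ->
  alg_iso c d -> alg_iso c' d'.
Proof.
move=> Hc Hd [P [Pu HP]]; exists P; split => // x y.
by rewrite -(amul_ext Hc) -(amul_ext Hd).
Qed.

Lemma alg_iso_sym {c d : sconst} : alg_iso c d -> alg_iso d c.
Proof.
move=> [P [Pu HP]]; exists (invmx P); split; first by rewrite unitmx_inv.
move=> x y; have := HP (x *m invmx P) (y *m invmx P).
by rewrite !mulmxKV // => <-; rewrite mulmxK.
Qed.

Lemma alg_iso_trans {c d e : sconst} : alg_iso c d -> alg_iso d e -> alg_iso c e.
Proof.
move=> [P [Pu HP]] [Q [Qu HQ]]; exists (P *m Q); split; first by rewrite unitmx_mul Pu.
by move=> x y; rewrite mulmxA HP HQ !mulmxA.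
Qed.

(* The generic member of \hat T_7: the fixed products e_i e_(i+1) = e_(i+2),
   e_3 e_5 = e_6, and the eleven free constants c_135, c_137, c_147, c_157,
   c_167, c_247, c_257, c_267, c_357, c_367, c_467; the table itself is indexed
   from 0. *)
Definition T7_table (p135 p137 p147 p157 p167 p247 p257 p267 p357 p367 p467 : Cplx)
    (i j k : nat) : Cplx :=
  match i, j, k with
  | 0,1,2 => 1 | 1,0,2 => -1
  | 1,2,3 => 1 | 2,1,3 => -1
  | 2,3,4 => 1 | 3,2,4 => -1
  | 3,4,5 => 1 | 4,3,5 => -1
  | 4,5,6 => 1 | 5,4,6 => -1
  | 2,4,5 => 1 | 4,2,5 => -1
  | 0,2,4 => p135 | 2,0,4 => - p135
  | 0,2,6 => p137 | 2,0,6 => - p137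
  | 0,3,6 => p147 | 3,0,6 => - p147
  | 0,4,6 => p157 | 4,0,6 => - p157
  | 0,5,6 => p167 | 5,0,6 => - p167
  | 1,3,6 => p247 | 3,1,6 => - p247
  | 1,4,6 => p257 | 4,1,6 => - p257
  | 1,5,6 => p267 | 5,1,6 => - p267
  | 2,4,6 => p357 | 4,2,6 => - p357
  | 2,5,6 => p367 | 5,2,6 => - p367
  | 3,5,6 => p467 | 5,3,6 => - p467
  | _,_,_ => 0
  end.

Definition T7 (p135 p137 p147 p157 p167 p247 p257 p267 p357 p367 p467 : Cplx) :
    sconst :=
  fun i j k => T7_table p135 p137 p147 p157 p167 p247 p257 p267 p357 p367 p467 i j k.

Lemma cf_val (c : sconst) (i j k : 'I_7) :
  c i j k = cf c (val i).+1 (val j).+1 (val k).+1.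
Proof. by rewrite /cf /= !inord_val. Qed.

Lemma T7hat_normal_form {c : sconst} : in_T7hat c ->
  forall i j k, c i j k =
    T7 (cf c 1 3 5) (cf c 1 3 7) (cf c 1 4 7) (cf c 1 5 7) (cf c 1 6 7)
       (cf c 2 4 7) (cf c 2 5 7) (cf c 2 6 7) (cf c 3 5 7) (cf c 3 6 7)
       (cf c 4 6 7) i j k.
Proof.
move=> [H0 [Ha [Ho [Hf [h134 [h145 [h156 [h245 [h256 [h146 [h246 [h136 [h356 _]]]]]]]]]]]]].
have H0' n k : cf c n.+1 n.+1 k.+1 = 0 by rewrite /cf /= H0.
have Ha' n m k : cf c n.+1 m.+1 k.+1 = - cf c m.+1 n.+1 k.+1 by rewrite /cf /= Ha.
have Ho' n m k : (n < 7)%N -> (m < 7)%N -> (k < 7)%N -> (k <= maxn n m)%N ->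
    cf c n.+1 m.+1 k.+1 = 0.
  by move=> hn hm hk hle; rewrite /cf /= Ho // !inordK.
move=> i j k; rewrite cf_val /T7.
case: i j k => i Hi [j Hj] [k Hk] /=.
do 7?[case: i Hi => [|i] Hi]; do 7?[case: j Hj => [|j] Hj]; do 7?[case: k Hk => [|k] Hk];
  rewrite /T7_table /=;
  first [ by []
        | by apply: H0'
        | by apply: Ho'
        | by rewrite Hf
        | by rewrite ?(h134, h145, h156, h245, h256, h146, h246, h136, h356)
        | by rewrite Ha' ?Hf ?(h134, h145, h156, h245, h256, h146, h246, h136, h356) ?oppr0 ].
Qed.

(* Rescaling e_i |-> w_i e_i with weights (a, 1, a, a, a^2, a^3, a^5); these
   satisfy w_(i+2) = w_i w_(i+1), w_5 = w_1 w_3 and w_6 = w_3 w_5, so the fixed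
   products of \hat T_7 are preserved, while c_467 gets multiplied by a. *)
Definition weight (a : Cplx) (n : nat) : Cplx :=
  match n with
  | 0 => a | 1 => 1 | 2 => a | 3 => a | 4 => a ^+ 2 | 5 => a ^+ 3 | _ => a ^+ 5
  end.

Definition rescale (c : sconst) (a : Cplx) : sconst :=
  fun i j k => c i j k * weight a k / (weight a i * weight a j).

Lemma weight_neq0 (a : Cplx) (n : nat) : a != 0 -> weight a n != 0.
Proof.
by move=> a0; case: n => [|[|[|[|[|[|n]]]]]] //=; rewrite ?oner_eq0 ?expf_neq0.
Qed.

Lemma cf_rescale (c : sconst) (a : Cplx) (i j k : nat) :
  (0 < i <= 7)%N -> (0 < j <= 7)%N -> (0 < k <= 7)%N ->
  cf (rescale c a) i j k = cf c i j k * weight a k.-1 / (weight a i.-1 * weight a j.-1).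
Proof.
case: i => [|i] //; case: j => [|j] //; case: k => [|k] //= hi hj hk.
by rewrite /cf /rescale /= !inordK.
Qed.

Lemma rescale_iso (c : sconst) {a : Cplx} : a != 0 -> alg_iso c (rescale c a).
Proof.
move=> a0; exists (diag_mx (\row_i weight a i)); split.
  rewrite unitmxE det_diag unitfE; apply/prodf_neq0 => i _.
  by rewrite mxE weight_neq0.
move=> x y; rewrite !mul_mx_diag; apply/rowP => k; rewrite !mxE big_distrl /=.
apply: eq_bigr => i _; rewrite big_distrl /=; apply: eq_bigr => j _.
rewrite !mxE /rescale.
have wi := weight_neq0 a i a0; have wj := weight_neq0 a j a0.
by field; rewrite wi wj.
Qed.

Lemma rescale_T7hat {c : sconst} {a : Cplx} :
  a != 0 -> in_T7hat c -> in_T7hat (rescale c a).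
Proof.
move=> a0 [H0 [Ha [Ho [Hf [h134 [h145 [h156 [h245 [h256 [h146 [h246 [h136 [h356 hnz]]]]]]]]]]]]].
split; first by move=> i k; rewrite /rescale H0 !mul0r.
split; first by move=> i j k; rewrite /rescale Ha (mulrC (weight a i)) !mulNr.
split; first by move=> i j k hle; rewrite /rescale Ho // !mul0r.
split.
  move=> i k hi hk; rewrite cf_rescale ?Hf //; try lia.
  case: eqP => [->|_]; last by rewrite !mul0r.
  by case/andP: hi; case: i {hk} => [|[|[|[|[|[|i]]]]]] //= _ _; field;
    rewrite ?a0 ?expf_neq0.
rewrite !cf_rescale // h134 h145 h156 h245 h256 h146 h246 h136 h356 !mul0r.
do 8 (split => //); split; first by rewrite /=; field; rewrite ?a0 ?expf_neq0.
move: hnz; rewrite mulf_eq0 negb_or => /andP [n135 n467].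
by rewrite !mulrA !mulf_neq0 ?invr_eq0 ?mulf_neq0.
Qed.

Lemma T7hat_neq0 {c : sconst} : in_T7hat c -> cf c 1 3 5 != 0 /\ cf c 4 6 7 != 0.
Proof.
move=> [_ [_ [_ [_ [_ [_ [_ [_ [_ [_ [_ [_ [_ hnz]]]]]]]]]]]]].
by move: hnz; rewrite mulf_eq0 negb_or => /andP.
Qed.

Lemma rescale_normalized {c : sconst} : in_T7hat c ->
  cf c 1 5 7 = 0 -> cf c 2 5 7 = 0 ->
  let d := rescale c (cf c 4 6 7)^-1 in
  cf d 1 5 7 = 0 /\ cf d 2 5 7 = 0 /\ cf d 4 6 7 = 1.
Proof.
move=> /T7hat_neq0 [_ n467] h157 h257 /=.
rewrite !cf_rescale // h157 h257 !mul0r; do 2 split => //=.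
by field; rewrite n467.
Qed.

Lemma eq_of_lin_comb (R : comPzRingType) (k x y L R' : R) :
  L = R' -> x - y = k * (L - R') -> x = y.
Proof. by move=> -> /eqP; rewrite subrr mulr0 subr_eq0 => /eqP. Qed.
Arguments eq_of_lin_comb {R} k {x y L R'}.

(* Entries P_IJ
   are indexed from 0 (row I is the image of e_(I+1)), structure constants
   c_ijk from 1.  Within the proofs, zIJ, oII, nzII, dII name the facts
   P_IJ = 0, P_II = 1, P_II != 0 and P_II = product of two diagonal entries. *)
Section Rigidity.
Context {a135 a137 a147 a167 a247 a267 a357 a367 : Cplx}.
Context {b135 b137 b147 b167 b247 b267 b357 b367 : Cplx}.
Context {P : 'M[Cplx]_7}.
Hypothesis a135_neq0 : a135 != 0.
Hypothesis b135_neq0 : b135 != 0.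
Hypothesis P_unit : P \in unitmx.
Hypothesis P_iso : forall i j k : 'I_7,
  \sum_(l < 7) T7 a135 a137 a147 0 a167 a247 0 a267 a357 a367 1 i j l * P l k =
  \sum_(a < 7) \sum_(b < 7)
     P i a * P j b * T7 b135 b137 b147 0 b167 b247 0 b267 b357 b367 1 a b k.

Ltac known := repeat match goal with
  | H : fun_of_matrix P ?i ?j = ?v |- context [fun_of_matrix P ?i ?j] =>
      match v with @GRing.zero _ => idtac | @GRing.one _ => idtac end; rewrite H
  | H : forall i j : 'I_7, is_true _ -> fun_of_matrix P i j = _
    |- context [fun_of_matrix P ?i ?j] => rewrite (H i j isT) /=
  | H : forall i : 'I_7, fun_of_matrix P i i = _
    |- context [fun_of_matrix P ?i ?i] => rewrite (H i)
  end.

Ltac coord i j k := have := P_iso i j k; rewrite !sum_ord7 /T7 /=; known.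

Ltac lin_solve := let H := fresh in move=> H;
  first [ by apply: (eq_of_lin_comb 1 H); ring | by apply: (eq_of_lin_comb (-1) H); ring ].

(* Since e_(n-2) e_(n-1) = e_n and products only raise indices, the image of
   e_n lies in span(e_n, ..., e_7) for n >= 3. *)
Lemma lower_zero (i j : 'I_7) : (2 <= i)%N && (j < i)%N -> P i j = 0.
Proof.
have z20 : P 'E2 'E0 = 0 by coord 'E0 'E1 'E0; lin_solve.
have z21 : P 'E2 'E1 = 0 by coord 'E0 'E1 'E1; lin_solve.
have z30 : P 'E3 'E0 = 0 by coord 'E1 'E2 'E0; lin_solve.
have z31 : P 'E3 'E1 = 0 by coord 'E1 'E2 'E1; lin_solve.
have z32 : P 'E3 'E2 = 0 by coord 'E1 'E2 'E2; lin_solve.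
have z40 : P 'E4 'E0 = 0 by coord 'E2 'E3 'E0; lin_solve.
have z41 : P 'E4 'E1 = 0 by coord 'E2 'E3 'E1; lin_solve.
have z42 : P 'E4 'E2 = 0 by coord 'E2 'E3 'E2; lin_solve.
have z43 : P 'E4 'E3 = 0 by coord 'E2 'E3 'E3; lin_solve.
have z50 : P 'E5 'E0 = 0 by coord 'E3 'E4 'E0; lin_solve.
have z51 : P 'E5 'E1 = 0 by coord 'E3 'E4 'E1; lin_solve.
have z52 : P 'E5 'E2 = 0 by coord 'E3 'E4 'E2; lin_solve.
have z53 : P 'E5 'E3 = 0 by coord 'E3 'E4 'E3; lin_solve.
have z54 : P 'E5 'E4 = 0 by coord 'E3 'E4 'E4; lin_solve.
have z60 : P 'E6 'E0 = 0 by coord 'E4 'E5 'E0; lin_solve.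
have z61 : P 'E6 'E1 = 0 by coord 'E4 'E5 'E1; lin_solve.
have z62 : P 'E6 'E2 = 0 by coord 'E4 'E5 'E2; lin_solve.
have z63 : P 'E6 'E3 = 0 by coord 'E4 'E5 'E3; lin_solve.
have z64 : P 'E6 'E4 = 0 by coord 'E4 'E5 'E4; lin_solve.
have z65 : P 'E6 'E5 = 0 by coord 'E4 'E5 'E5; lin_solve.
by elim/ord7_cases: i; elim/ord7_cases: j => //= _; known.
Qed.


(* The chain e_i e_(i+1) = e_(i+2) forces P_(i+2)(i+2) = P_ii P_(i+1)(i+1). *)
Lemma diag_recurrence :
  [/\ P 'E3 'E3 = P 'E1 'E1 * P 'E2 'E2, P 'E4 'E4 = P 'E2 'E2 * P 'E3 'E3,
      P 'E5 'E5 = P 'E3 'E3 * P 'E4 'E4 & P 'E6 'E6 = P 'E4 'E4 * P 'E5 'E5].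
Proof.
have low := lower_zero.
by split; [coord 'E1 'E2 'E3 | coord 'E2 'E3 'E4 | coord 'E3 'E4 'E5 | coord 'E4 'E5 'E6];
  lin_solve.
Qed.

(* P is invertible and lower_zero makes its last row (0, ..., 0, P_66), so
   P_66 != 0; the recurrence then propagates this down the diagonal. *)
Lemma diag_neq0 (i : 'I_7) : (2 <= i)%N -> P i i != 0.
Proof.
have low := lower_zero.
have nz66 : P 'E6 'E6 != 0.
  have := congr1 (fun M : 'M[Cplx]_7 => M 'E6 'E6) (mulmxV P_unit).
  rewrite !mxE !sum_ord7 /=; known; rewrite !mul0r !add0r.
  by apply: contra_eqN => /eqP->; rewrite mul0r eq_sym oner_eq0.
have [_ d44 _ d66] := diag_recurrence.
move: (nz66); rewrite d66 mulf_eq0 negb_or => /andP [nz44 nz55].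
move: (nz44); rewrite d44 mulf_eq0 negb_or => /andP [nz22 nz33].
by elim/ord7_cases: i.
Qed.

(* Off the diagonal, the upper left 5x5 block of P vanishes; the entry P_10
   is killed by c_135 != 0 on both sides. *)
Lemma upper_block_zero (i j : 'I_7) :
  [&& (i <= 4)%N, (j <= 4)%N & i != j] -> P i j = 0.
Proof.
have low := lower_zero.
have [nz22 nz33] := (diag_neq0 'E2 isT, diag_neq0 'E3 isT).
have nz44 := diag_neq0 'E4 isT.
have z01 : P 'E0 'E1 = 0.
  by apply: (mulIf nz22); rewrite mul0r; coord 'E0 'E2 'E3; lin_solve.
have z02 : P 'E0 'E2 = 0.
  by apply: (mulIf nz33); rewrite mul0r; coord 'E0 'E3 'E4; lin_solve.
have z12 : P 'E1 'E2 = 0.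
  by apply: (mulIf nz33); rewrite mul0r; coord 'E1 'E3 'E4; lin_solve.
have z23 : P 'E2 'E3 = 0 by coord 'E0 'E1 'E3; lin_solve.
have z03 : P 'E0 'E3 = 0.
  by apply: (mulIf nz44); rewrite mul0r; coord 'E0 'E4 'E5; lin_solve.
have z13 : P 'E1 'E3 = 0.
  by apply: (mulIf nz44); rewrite mul0r; coord 'E1 'E4 'E5; lin_solve.
have z04 : P 'E0 'E4 = 0.
  by apply: (mulIf nz33); rewrite mul0r; coord 'E0 'E3 'E5; lin_solve.
have z14 : P 'E1 'E4 = 0.
  by apply: (mulIf nz33); rewrite mul0r; coord 'E1 'E3 'E5; lin_solve.
have z24 : P 'E2 'E4 = 0 by coord 'E0 'E1 'E4; lin_solve.
have z45 : P 'E4 'E5 = 0.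
  by apply: (mulfI a135_neq0); rewrite mulr0; coord 'E0 'E2 'E5; lin_solve.
have z34 : P 'E3 'E4 = 0.
  by apply: (mulfI nz22); rewrite mulr0; coord 'E2 'E3 'E5; lin_solve.
have z10 : P 'E1 'E0 = 0.
  apply: (mulIf nz22); apply: (mulfI b135_neq0); rewrite mul0r mulr0.
  by coord 'E1 'E2 'E4; lin_solve.
by elim/ord7_cases: i; elim/ord7_cases: j => //= _; known.
Qed.

(* The diagonal of P is 1: the two products e_6 = e_4 e_5 = e_3 e_5 give
   P_11 = 1, and e_7 = e_5 e_6 = e_4 e_6 (here c_467 = 1 is used) give
   P_22 = 1; the recurrence does the rest. *)
Lemma diag_one (i : 'I_7) : P i i = 1.
Proof.
have low := lower_zero; have upper := upper_block_zero.
have [nz22 nz33] := (diag_neq0 'E2 isT, diag_neq0 'E3 isT).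
have [nz44 nz55] := (diag_neq0 'E4 isT, diag_neq0 'E5 isT).
have [d33 d44 d55 d66] := diag_recurrence.
have o11 : P 'E1 'E1 = 1.
  have d55' : P 'E5 'E5 = P 'E2 'E2 * P 'E4 'E4 by coord 'E2 'E4 'E5; lin_solve.
  apply: (mulIf nz22); apply: (mulIf nz44).
  by rewrite mul1r -d33 -d55 -d55'.
have o22 : P 'E2 'E2 = 1.
  have d66' : P 'E6 'E6 = P 'E3 'E3 * P 'E5 'E5 by coord 'E3 'E5 'E6; lin_solve.
  apply: (mulIf nz33); apply: (mulIf nz55).
  by rewrite mul1r -d44 -d66 -d66'.
have o00 : P 'E0 'E0 = 1.
  have d22 : P 'E2 'E2 = P 'E0 'E0 * P 'E1 'E1 by coord 'E0 'E1 'E2; lin_solve.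
  by move: d22; rewrite o22 o11 mulr1.
have o33 : P 'E3 'E3 = 1 by rewrite d33 o11 o22 mulr1.
have o44 : P 'E4 'E4 = 1 by rewrite d44 o22 o33 mulr1.
have o55 : P 'E5 'E5 = 1 by rewrite d55 o33 o44 mulr1.
have o66 : P 'E6 'E6 = 1 by rewrite d66 o44 o55 mulr1.
by elim/ord7_cases: i.
Qed.

Lemma near_identity (i j : 'I_7) :
  ~~ ((i < 2)%N && (j == 6 :> nat)) -> P i j = (i == j)%:R.
Proof.
have low := lower_zero; have upper := upper_block_zero; have one := diag_one.
have z45 : P 'E4 'E5 = 0 by coord 'E2 'E3 'E5; lin_solve.
have z05 : P 'E0 'E5 = 0 by coord 'E0 'E4 'E6; lin_solve.
have z15 : P 'E1 'E5 = 0 by coord 'E1 'E4 'E6; lin_solve.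
have z25 : P 'E2 'E5 = 0 by coord 'E0 'E1 'E5; lin_solve.
have z26 : P 'E2 'E6 = 0 by coord 'E0 'E1 'E6; lin_solve.
have z35 : P 'E3 'E5 = 0 by coord 'E1 'E2 'E5; lin_solve.
have z36 : P 'E3 'E6 = 0 by coord 'E1 'E2 'E6; lin_solve.
have z46 : P 'E4 'E6 = 0 by coord 'E2 'E3 'E6; lin_solve.
have z56 : P 'E5 'E6 = 0 by coord 'E3 'E4 'E6; lin_solve.
by elim/ord7_cases: i; elim/ord7_cases: j => //= _; known.
Qed.

Lemma params_eq :
  [/\ a135 = b135, a137 = b137, a147 = b147, a167 = b167 &
      [/\ a247 = b247, a267 = b267, a357 = b357 & a367 = b367]].
Proof.
have near := near_identity.
split; [coord 'E0 'E2 'E4 | coord 'E0 'E2 'E6 | coord 'E0 'E3 'E6 | coord 'E0 'E5 'E6 |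
  split; [coord 'E1 'E3 'E6 | coord 'E1 'E5 'E6 | coord 'E2 'E4 'E6 | coord 'E2 'E5 'E6]];
  lin_solve.
Qed.

End Rigidity.

Lemma normalized_iso_eq {d d' : sconst} : in_T7hat d -> in_T7hat d' ->
  cf d 1 5 7 = 0 -> cf d 2 5 7 = 0 -> cf d 4 6 7 = 1 ->
  cf d' 1 5 7 = 0 -> cf d' 2 5 7 = 0 -> cf d' 4 6 7 = 1 ->
  alg_iso d d' -> forall i j k, d' i j k = d i j k.
Proof.
move=> Hd Hd' d157 d257 d467 d'157 d'257 d'467 Idd'.
have := alg_iso_ext (T7hat_normal_form Hd) (T7hat_normal_form Hd') Idd'.
rewrite d157 d257 d467 d'157 d'257 d'467 => -[P [Pu /alg_iso_coord HP]].
have [e135 e137 e147 e167 [e247 e267 e357 e367]] :=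
  params_eq (T7hat_neq0 Hd).1 (T7hat_neq0 Hd').1 Pu HP.
move=> i j k; rewrite (T7hat_normal_form Hd') (T7hat_normal_form Hd).
by rewrite d157 d257 d467 d'157 d'257 d'467 e135 e137 e147 e167 e247 e267 e357 e367.
Qed.

Theorem mainTheorem19 (c : sconst) :
  in_T7hat c -> cf c 1 5 7 = 0 -> cf c 2 5 7 = 0 ->
  exists d : sconst,
    (in_T7hat d /\ cf d 1 5 7 = 0 /\ cf d 2 5 7 = 0 /\ cf d 4 6 7 = 1) /\
    alg_iso c d /\
    (forall d' : sconst,
       in_T7hat d' -> cf d' 1 5 7 = 0 -> cf d' 2 5 7 = 0 -> cf d' 4 6 7 = 1 ->
       alg_iso c d' -> forall i j k : 'I_7, d' i j k = d i j k).
Proof.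
move=> Hc c157 c257.
have a_neq0 : (cf c 4 6 7)^-1 != 0 by rewrite invr_eq0 (T7hat_neq0 Hc).2.
have Hd := rescale_T7hat a_neq0 Hc.
have Icd := rescale_iso c a_neq0.
have [d157 [d257 d467]] := rescale_normalized Hc c157 c257.
exists (rescale c (cf c 4 6 7)^-1); split; first by [].
split=> [//|d' Hd' d'157 d'257 d'467 Icd'].
apply: (normalized_iso_eq Hd Hd') => //.
exact: alg_iso_trans (alg_iso_sym Icd) Icd'.
Qed.
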